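(* Let $G\subset\mathbb R^r$ be a lattice of rank $r$ acting on $C(\mathbb R^r)$ by $f^g(x)=f(x+g)$, and let $n\in\mathbb Z_+$. A function $p\in C(\mathbb R^r)$ is a $G$-periodic polynomial of degree at most $n$ if and only if $D^{n+1}p=0$; that is, $P_n^G=\mathcal P_n(G,C(\mathbb R^r))$.
   Context: $C(\mathbb R^r)$ is the algebra of continuous (real or complex) functions on $\mathbb R^r$; $x_1,\dots,x_r$ are the standard coordinates. $C^G$ is the subalgebra of $G$-periodic continuous functions ($f(x+g)=f(x)$ for all $g\in G$). $P_n^G$ is the space of polynomials in $x_1,\dots,x_r$ of degree at most $n$ with coefficients in $C^G$. $\mathcal C^0(G,A)=A$; for $n\ge1$, $\mathcal C^n(G,A)$ is the space of functions $G^n\to A$ vanishing whenever some argument is $0$; $(d_nc)(g_1,\dots,g_n)=[c(g_1,\dots,g_{n-1})]^{g_n}-c(g_1,\dots,g_{n-1})$; $D^0=\mathrm{id}$, $D^n=d_nD^{n-1}$; $\mathcal P_n(G,A)=\ker D^{n+1}$. *)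

From HB Require Import structures.
From mathcomp Require Import all_boot all_order all_algebra.
From mathcomp Require Import all_classical all_reals all_analysis.
Set Implicit Arguments. Unset Strict Implicit. Unset Printing Implicit Defensive.
Import Order.TTheory GRing.Theory Num.Theory.
Import numFieldTopology.Exports numFieldNormedType.Exports.
Local Open Scope ring_scope.
Local Open Scope classical_set_scope.

Section Defs.
Variables (R : realType) (r : nat).

Definition is_full_lattice (G : set 'rV[R]_r) : Prop :=
  exists b : 'M[R]_r, b \in unitmx /\
    G = [set x | exists k : 'rV[int]_r, x = map_mx (fun z : int => z%:~R) k *m b].

Definition periodic (G : set 'rV[R]_r) (f : 'rV[R]_r -> R) : Prop :=
  forall g, G g -> forall x, f (x + g) = f x.

Local Notation midx n := {ffun 'I_r -> 'I_n.+1}.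

Definition monomial (n : nat) (a : {ffun 'I_r -> 'I_n.+1}) (x : 'rV[R]_r) : R :=
  \prod_(i < r) (x ord0 i) ^+ (a i : nat).

Definition periodic_poly (G : set 'rV[R]_r) (n : nat) (p : 'rV[R]_r -> R) : Prop :=
  exists c : {ffun 'I_r -> 'I_n.+1} -> ('rV[R]_r -> R),
    (forall a, continuous (c a) /\ periodic G (c a)) /\
    forall x, p x = \sum_(a : midx n | (\sum_(i < r) (a i : nat) <= n)%N)
                      c a x * monomial a x.

(* The iterated difference D^k : A -> C^k(G, A), A = C(R^r), with action
   f^g (x) = f (x + g).  The arguments g_1, ..., g_k are gs 0, ..., gs (k-1):
   (D^{k+1} p)(g_1..g_{k+1}) = (D^k p (g_1..g_k))^{g_{k+1}} - D^k p (g_1..g_k). *)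
Fixpoint Dop (k : nat) (p : 'rV[R]_r -> R) (gs : nat -> 'rV[R]_r) : 'rV[R]_r -> R :=
  match k with
  | 0 => p
  | k'.+1 => fun x => Dop k' p gs (x + gs k') - Dop k' p gs x
  end.

Definition in_calP (G : set 'rV[R]_r) (n : nat) (p : 'rV[R]_r -> R) : Prop :=
  forall gs : nat -> 'rV[R]_r, (forall i, (i <= n)%N -> G (gs i)) ->
    Dop n.+1 p gs = (fun _ => 0).

End Defs.

From Pilot Require Import Defs.
From HB Require Import structures.
From mathcomp Require Import all_boot all_order all_algebra.
From mathcomp Require Import all_classical all_reals all_analysis.
From mathcomp Require Import ring.
From Stdlib Require List.
Set Implicit Arguments.
Unset Strict Implicit.
Unset Printing Implicit Defensive.
Import Order.TTheory GRing.Theory Num.Theory.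
Import numFieldTopology.Exports numFieldNormedType.Exports.
Local Open Scope ring_scope.
Local Open Scope classical_set_scope.

(* A periodic polynomial of degree at most n lies in the algebra generated by
   the continuous G-periodic functions (degree 0) and the coordinates
   (degree 1).  A difference along a period lowers the degree by one and kills
   the periodic functions, so D^{n+1} vanishes on it.
   Conversely, let b_1, ..., b_r be a basis of G, t_1, ..., t_r the
   coordinates in this basis, and B_beta = prod_j binom(t_j, beta_j) the
   products of generalized binomial coefficients.  By Pascal's rule the
   difference along b_i sends B_beta to B_(beta - e_i).  Hence if all
   (n+1)-fold differences of p vanish, its n-fold differences D^beta p
   (|beta| = n) are periodic, and p - sum_(|beta| = n) D^beta p * B_beta has
   vanishing n-fold differences; induction on n concludes. *)

Lemma Forall_allpairs (S T U : Type) (P : S -> Prop) (Q : T -> Prop)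
    (W : U -> Prop) (f : S -> T -> U) (s : seq S) (t : seq T) :
  (forall x y, P x -> Q y -> W (f x y)) ->
  List.Forall P s -> List.Forall Q t ->
  List.Forall W [seq f x y | x <- s, y <- t].
Proof.
move=> PQW; elim: s => [|x s IHs] // /List.Forall_cons_iff[Px Ps] Qt.
rewrite allpairs_cons; apply/List.Forall_app; split; last exact: IHs.
elim: {IHs} t Qt => [|y t IHt] // /List.Forall_cons_iff[Qy Qt].
by constructor; auto.
Qed.

Section Differences.
Variables (V : zmodType) (K : ringType).
Implicit Types (u v : V) (f c : V -> K).

Definition delta v f : V -> K := fun x => f (x + v) - f x.

Definition deltas (vs : seq V) f : V -> K := foldr delta f vs.

Lemma shift_mulrz_invariant (T : Type) (g : V -> T) v :
  (forall x, g (x + v) = g x) -> forall (z : int) x, g (x + v *~ z) = g x.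
Proof.
move=> gv; have gvn (n : nat) x : g (x + v *+ n) = g x.
  by elim: n x => [|n IHn] x; rewrite ?mulr0n ?addr0 // mulrSr addrA gv IHn.
case=> n x; first exact: gvn.
by rewrite NegzE mulrNz -[in RHS](subrK (v *+ n.+1) x) gvn.
Qed.

Lemma subrACA (a b c d : K) : a - b - (c - d) = a - c - (b - d).
Proof. by rewrite !opprB addrACA [RHS]addrACA [- c + _]addrC. Qed.

Lemma delta_eq0 v f : delta v f = cst 0 -> forall x, f (x + v) = f x.
Proof.
by move=> dvf x; apply/eqP; rewrite -subr_eq0 -[_ - _]/(delta v f x) dvf.
Qed.

Lemma delta_comm u v f : delta u (delta v f) = delta v (delta u f).
Proof. by apply: funext => x; rewrite /delta (addrAC x v u) subrACA. Qed.

Lemma deltas_delta vs v f : deltas vs (delta v f) = delta v (deltas vs f).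
Proof. by elim: vs => [|u vs IHvs] //=; rewrite IHvs delta_comm. Qed.

Lemma deltas_cat us vs f : deltas (us ++ vs) f = deltas us (deltas vs f).
Proof. exact: foldr_cat. Qed.

Lemma deltas_comm us vs f : deltas us (deltas vs f) = deltas vs (deltas us f).
Proof. by elim: vs => [|v vs IHvs] //=; rewrite deltas_delta IHvs. Qed.

Lemma deltas_perm us vs f : perm_eq us vs -> deltas us f = deltas vs f.
Proof.
move=> us_vs; pose P ws := deltas us f = deltas ws f.
apply: (@catCA_perm_ind _ P) us_vs _ => // ws1 ws2 ws3.
by rewrite /P !deltas_cat deltas_comm.
Qed.

Lemma deltasB vs f h : deltas vs (f \- h) = deltas vs f \- deltas vs h.
Proof.
elim: vs => [|v vs IHvs] //=; rewrite IHvs.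
by apply: funext => x; rewrite /delta /= subrACA.
Qed.

Lemma deltas_sum (I : Type) (l : seq I) (P : pred I) (F : I -> V -> K) vs :
  deltas vs (fun x => \sum_(i <- l | P i) F i x) =
  (fun x => \sum_(i <- l | P i) deltas vs (F i) x).
Proof.
elim: vs => [|v vs IHvs] //=; rewrite IHvs.
by apply: funext => x; rewrite /delta -sumrB.
Qed.

Lemma deltas_mull_invariant vs c f :
    (forall v, v \in vs -> forall x, c (x + v) = c x) ->
  deltas vs (c \* f) = c \* deltas vs f.
Proof.
elim: vs => [|v vs IHvs] //= cvs; rewrite IHvs => [|u uvs]; last first.
  by apply: cvs; rewrite inE uvs orbT.
by apply: funext => x; rewrite /delta /= cvs ?mem_head // mulrBr.
Qed.

End Differences.

Section GeneralizedBinomial.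
Variable R : numFieldType.

Fixpoint binomr (t : R) (k : nat) : R :=
  if k is k'.+1 then binomr t k' * (t - k'%:R) / k'.+1%:R else 1.

Lemma binomrD1 t k : binomr (t + 1) k.+1 = binomr t k.+1 + binomr t k.
Proof.
elim: k => [|k IHk]; first by rewrite /= !mul1r !subr0 !divr1 addrC.
rewrite -[LHS]/(binomr (t + 1) k.+1 * (t + 1 - k.+1%:R) / k.+2%:R) IHk /=.
have: (k.+1%:R : R) != 0 /\ (k.+2%:R : R) != 0 by rewrite !pnatr_eq0.
by rewrite !mulrSr => -[k1_neq0 k2_neq0]; field; rewrite k1_neq0 k2_neq0.
Qed.

End GeneralizedBinomial.

Section PeriodicPolynomials.
Variables (R : realType) (r : nat) (G : set 'rV[R]_r).
Local Notation vec := 'rV[R]_r.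
Implicit Types (f h c p : vec -> R) (v g : vec) (vs : seq vec).

Lemma continuous_translate v f :
  continuous f -> continuous (fun x : vec => f (x + v)).
Proof.
move=> cf x; apply: continuous_comp; last exact: cf.
by apply: continuousD; [exact: cvg_id | exact: cst_continuous].
Qed.

Lemma continuous_delta f v : continuous f -> continuous (delta v f).
Proof.
by move=> cf x; apply: continuousB; [exact: continuous_translate | exact: cf].
Qed.

Lemma continuous_deltas vs f : continuous f -> continuous (deltas vs f).
Proof. by move=> cf; elim: vs => [|v vs IHvs] //=; exact: continuous_delta. Qed.

Lemma Dop_deltas k p gs : Dop k p gs = deltas (mkseq gs k) p.
Proof.
elim: k => [|k IHk] //.
by rewrite mkseqS -cats1 deltas_cat /= deltas_delta -IHk.
Qed.

Lemma in_calP_deltas n p vs :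
  in_calP G n p -> (forall v, v \in vs -> G v) -> size vs = n.+1 ->
  deltas vs p = cst 0.
Proof.
move=> hP Gvs svs; rewrite -(mkseq_nth 0 vs) svs -Dop_deltas.
by apply: hP => i lein; apply: Gvs; rewrite mem_nth // svs ltnS.
Qed.

Inductive ppoly : nat -> (vec -> R) -> Prop :=
| ppoly_periodic n c : continuous c -> Defs.periodic G c -> ppoly n c
| ppolyD n f h : ppoly n f -> ppoly n h -> ppoly n (f \+ h)
| ppolyM m n f h : ppoly m f -> ppoly n h -> ppoly (m + n) (f \* h)
| ppoly_coord i : ppoly 1 (fun x => x ord0 i)
| ppoly_widen m n f : (m <= n)%N -> ppoly m f -> ppoly n f.

Lemma ppoly_continuous n f : ppoly n f -> continuous f.
Proof.
elim=> {n f} // [n f h _ cf _ ch x | m n f h _ cf _ ch x | i].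
- exact: continuousD (cf x) (ch x).
- exact: continuousM (cf x) (ch x).
- exact: coord_continuous.
Qed.

Lemma eq_ppoly n f h : f =1 h -> ppoly n f -> ppoly n h.
Proof. by move=> /funext ->. Qed.

Lemma ppoly_cst n a : ppoly n (cst a).
Proof. by apply: ppoly_periodic; [exact: cst_continuous | move=> g _ x]. Qed.

Lemma ppoly_scale n a f : ppoly n f -> ppoly n (cst a \* f).
Proof. exact: ppolyM 0%N n _ _ (ppoly_cst 0 a). Qed.

Lemma ppolyB n f h : ppoly n f -> ppoly n h -> ppoly n (f \- h).
Proof.
move=> pf ph; apply: eq_ppoly (ppolyD pf (ppoly_scale (-1) ph)) => x /=.
by rewrite mulN1r.
Qed.

Lemma ppoly_sum (I : Type) (l : seq I) (P : pred I) (F : I -> vec -> R) n :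
  (forall i, P i -> ppoly n (F i)) ->
  ppoly n (fun x => \sum_(i <- l | P i) F i x).
Proof.
move=> pF; elim: l => [|i l IHl].
  by apply: eq_ppoly (ppoly_cst n 0) => x; rewrite big_nil.
case Pi: (P i).
  by apply: eq_ppoly (ppolyD (pF i Pi) IHl) => x; rewrite big_cons Pi.
by apply: eq_ppoly IHl => x; rewrite big_cons Pi.
Qed.

Lemma ppoly_prod (I : Type) (l : seq I) (d : I -> nat) (F : I -> vec -> R) :
  (forall i, ppoly (d i) (F i)) ->
  ppoly (\sum_(i <- l) d i) (fun x => \prod_(i <- l) F i x).
Proof.
move=> pF; elim: l => [|i l IHl].
  by rewrite big_nil; apply: eq_ppoly (ppoly_cst 0 1) => x; rewrite big_nil.
by rewrite big_cons; apply: eq_ppoly (ppolyM (pF i) IHl) => x; rewrite big_cons.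
Qed.

Lemma ppoly_coord_exp i k : ppoly k (fun x => x ord0 i ^+ k).
Proof.
elim: k => [|k IHk].
  by apply: eq_ppoly (ppoly_cst 0 1) => x; rewrite expr0.
by apply: eq_ppoly (ppolyM (ppoly_coord i) IHk) => x; rewrite exprS.
Qed.

Lemma ppoly_shift n f v : ppoly n f -> ppoly n (fun x => f (x + v)).
Proof.
elim=> {n f} [n c cc pc | n f h _ pf _ ph | m n f h _ pf _ ph | i
             | m n f mn _ pf].
- apply: ppoly_periodic; first exact: continuous_translate cc.
  by move=> g Gg x; rewrite addrAC (pc g Gg).
- exact: ppolyD pf ph.
- exact: ppolyM pf ph.
- apply: eq_ppoly (ppolyD (ppoly_coord i) (ppoly_cst 1 (v ord0 i))) => x /=.
  by rewrite mxE.
- exact: ppoly_widen mn pf.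
Qed.

Lemma ppoly0_periodic f : ppoly 0 f -> Defs.periodic G f.
Proof.
move e0 : 0%N => n pf; move: pf e0.
elim=> {n f} // [n f h _ pf _ ph n0 | m n f h _ pf _ ph | m n f mn _ pf n0].
- by move=> g Gg x /=; rewrite pf ?ph.
- move/esym/eqP; rewrite addn_eq0 => /andP[/eqP m0 /eqP n0] g Gg x /=.
  by rewrite pf ?ph.
- by apply: pf; move: mn; rewrite -n0 leqn0 => /eqP.
Qed.

Lemma ppoly_delta n f g : G g -> ppoly n f -> ppoly n.-1 (delta g f).
Proof.
move=> Gg; elim=> {n f} [n c _ pc | n f h _ pf _ ph | m n f h pf IHf ph IHh | i
                       | m n f mn _ pf].
- have -> : delta g c = cst 0 by apply: funext => x; rewrite /delta pc ?subrr.
  exact: ppoly_cst.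
- have -> : delta g (f \+ h) = delta g f \+ delta g h.
    by apply: funext => x; rewrite /delta /= opprD addrACA.
  exact: ppolyD.
- case: m pf IHf => [|m] pf IHf.
    have -> : delta g (f \* h) = f \* delta g h.
      by apply: funext => x; rewrite /delta /= mulrBr (ppoly0_periodic pf).
    by rewrite add0n -[n.-1]add0n; exact: ppolyM.
  case: n ph IHh => [|n] ph IHh.
    have -> : delta g (f \* h) = delta g f \* h.
      by apply: funext => x; rewrite /delta /= mulrBl (ppoly0_periodic ph).
    by rewrite addn0 -[m.+1.-1]addn0; exact: ppolyM.
  have -> : delta g (f \* h) =
             delta g f \* (fun x => h (x + g)) \+ f \* delta g h.
    by apply: funext => x; rewrite /delta /= mulrBl mulrBr addrA subrK.
  rewrite addSn succnK; apply: ppolyD.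
    exact: ppolyM IHf (ppoly_shift g ph).
  by rewrite -addSnnS; exact: ppolyM pf IHh.
- have -> : delta g (fun x => x ord0 i) = cst (g ord0 i).
    by apply: funext => x; rewrite /delta mxE addrAC subrr add0r.
  exact: ppoly_cst.
- by apply: ppoly_widen pf; rewrite -!subn1 leq_sub2r.
Qed.

Lemma ppoly_Dop n k p gs :
  ppoly n p -> (forall i, (i < k)%N -> G (gs i)) -> ppoly (n - k) (Dop k p gs).
Proof.
move=> pp Ggs; elim: k Ggs => [|k IHk] Ggs; first by rewrite subn0.
rewrite subnS; apply: ppoly_delta (Ggs k _) (IHk _) => // i ltik.
exact/Ggs/ltnW.
Qed.

Lemma ppoly_in_calP n p : ppoly n p -> in_calP G n p.
Proof.
move=> pp gs Ggs.
have := ppoly_Dop pp (fun i (ltin : (i < n)%N) => Ggs i (ltnW ltin)).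
rewrite subnn => /ppoly0_periodic perD; apply: funext => x /=.
by rewrite (perD _ (Ggs n (leqnn n))) subrr.
Qed.

(* Monomials are encoded as words in the coordinates, so that multiplying
   them is concatenation. *)
Definition mono_seq (s : seq 'I_r) (x : vec) : R := \prod_(j <- s) x ord0 j.

Definition term_ok n (t : (vec -> R) * seq 'I_r) : Prop :=
  [/\ continuous t.1, Defs.periodic G t.1 & (size t.2 <= n)%N].

Definition eval_terms (ts : seq ((vec -> R) * seq 'I_r)) (x : vec) : R :=
  \sum_(t <- ts) t.1 x * mono_seq t.2 x.

Definition mul_term (t u : (vec -> R) * seq 'I_r) := (t.1 \* u.1, t.2 ++ u.2).

Lemma term_ok_mul m n t u :
  term_ok m t -> term_ok n u -> term_ok (m + n) (mul_term t u).
Proof.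
move=> [ct pt st] [cu pu su]; split => /=.
- by move=> x; exact: continuousM (ct x) (cu x).
- by move=> g Gg x; rewrite /= (pt g Gg) (pu g Gg).
- by rewrite size_cat leq_add.
Qed.

Lemma eval_terms_cat ts us :
  eval_terms (ts ++ us) = eval_terms ts \+ eval_terms us.
Proof. by apply: funext => x; rewrite /eval_terms big_cat. Qed.

Lemma eval_terms_mul ts us :
  eval_terms [seq mul_term t u | t <- ts, u <- us] =
  eval_terms ts \* eval_terms us.
Proof.
apply: funext => x; rewrite /eval_terms big_allpairs_dep /= mulr_suml.
apply: eq_bigr => t _; rewrite mulr_sumr; apply: eq_bigr => u _.
by rewrite /mono_seq big_cat mulrACA.
Qed.

Lemma ppoly_terms n f :
  ppoly n f -> exists ts, List.Forall (term_ok n) ts /\ f = eval_terms ts.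
Proof.
elim=> {n f} [n c cc pc | n f h _ [ts [ok ->]] _ [us [ok' ->]]
             | m n f h _ [ts [ok ->]] _ [us [ok' ->]] | i
             | m n f mn _ [ts [ok ->]]].
- exists [:: (c, [::])]; split; first by constructor.
  by apply: funext => x; rewrite /eval_terms big_seq1 /mono_seq big_nil mulr1.
- exists (ts ++ us); split; last by rewrite eval_terms_cat.
  exact/List.Forall_app.
- exists [seq mul_term t u | t <- ts, u <- us].
  split; last by rewrite eval_terms_mul.
  exact: Forall_allpairs (@term_ok_mul m n) ok ok'.
- exists [:: (cst 1, [:: i])]; split.
    by constructor=> //; split=> //; exact: cst_continuous.
  by apply: funext => x; rewrite /eval_terms big_seq1 /mono_seq big_seq1 mul1r.
- exists ts; split=> //; apply: List.Forall_impl ok => t [ct pt st].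
  by split=> //; exact: leq_trans mn.
Qed.

Definition midx_of_seq n (s : seq 'I_r) : {ffun 'I_r -> 'I_n.+1} :=
  [ffun i => inord (count_mem i s)].

Lemma sum_count_mem (s : seq 'I_r) : (\sum_(i < r) count_mem i s)%N = size s.
Proof.
elim: s => [|j s IHs] /=; first by rewrite big1.
rewrite big_split /= IHs (bigD1 j) //= eqxx big1 // => i /negbTE.
by rewrite eq_sym => ->.
Qed.

Lemma midx_of_seqE n s i :
  (size s <= n)%N -> midx_of_seq n s i = count_mem i s :> nat.
Proof.
by move=> sn; rewrite ffunE inordK // ltnS (leq_trans (count_size _ _) sn).
Qed.

Lemma prod_exp_count_mem (s : seq 'I_r) (x : vec) :
  \prod_(i < r) x ord0 i ^+ count_mem i s = mono_seq s x.
Proof.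
elim: s => [|j s IHs].
  by rewrite /mono_seq big_nil big1 // => i _; rewrite expr0.
rewrite /mono_seq big_cons -/(mono_seq s x) -IHs.
under eq_bigr do rewrite /= exprD.
rewrite big_split /= (bigD1 j) //= eqxx expr1 big1 ?mulr1 // => i /negbTE.
by rewrite eq_sym => ->; rewrite expr0.
Qed.

Lemma monomial_midx_of_seq n s x :
  (size s <= n)%N -> monomial (midx_of_seq n s) x = mono_seq s x.
Proof.
move=> sn; rewrite /monomial -prod_exp_count_mem.
by apply: eq_bigr => i _; rewrite midx_of_seqE.
Qed.

Lemma periodic_poly0 n : periodic_poly G n (cst 0).
Proof.
exists (fun _ => cst 0); split=> [a | x].
  by split; [exact: cst_continuous | move=> g _ x].
by rewrite big1 // => a _; rewrite mul0r.
Qed.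

Lemma periodic_polyD n f h :
  periodic_poly G n f -> periodic_poly G n h -> periodic_poly G n (f \+ h).
Proof.
move=> [c [okc /funext ->]] [d [okd /funext ->]].
exists (fun a => c a \+ d a); split=> [a | x].
  have [[cc pc] [cd pd]] := (okc a, okd a); split=> [x | g Gg x].
    exact: continuousD (cc x) (cd x).
  by rewrite /= (pc g Gg) (pd g Gg).
by rewrite /= -big_split; apply: eq_bigr => a _; rewrite mulrDl.
Qed.

Lemma periodic_poly_term n t :
  term_ok n t -> periodic_poly G n (fun x => t.1 x * mono_seq t.2 x).
Proof.
move=> [ct pt st]; pose a0 := midx_of_seq n t.2.
exists (fun a => if a == a0 then t.1 else cst 0); split=> [a | x].
  by case: eqP => _; [split | split; [exact: cst_continuous | move=> g _ x]].
have deg_a0 : (\sum_(i < r) (a0 i : nat) <= n)%N.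
  by rewrite (eq_bigr _ (fun i _ => midx_of_seqE i st)) sum_count_mem.
rewrite (bigD1 a0) //= eqxx monomial_midx_of_seq // big1 ?addr0 //.
by move=> a /andP[_ /negbTE ->]; rewrite mul0r.
Qed.

Lemma periodic_poly_terms n ts :
  List.Forall (term_ok n) ts -> periodic_poly G n (eval_terms ts).
Proof.
elim=> [|t {}ts okt _ IHts].
  have -> : eval_terms [::] = cst 0.
    by apply: funext => x; rewrite /eval_terms big_nil.
  exact: periodic_poly0.
have -> : eval_terms (t :: ts) =
          (fun x => t.1 x * mono_seq t.2 x) \+ eval_terms ts.
  by apply: funext => x; rewrite /eval_terms big_cons.
exact: periodic_polyD (periodic_poly_term okt) IHts.
Qed.

Lemma ppoly_periodic_poly n f : ppoly n f -> periodic_poly G n f.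
Proof. by move=> /ppoly_terms[ts [ok ->]]; exact: periodic_poly_terms. Qed.

Lemma periodic_poly_ppoly n p : periodic_poly G n p -> ppoly n p.
Proof.
move=> [c [okc /funext ->]]; apply: ppoly_sum => a deg_a.
apply: ppoly_widen deg_a (ppolyM (ppoly_periodic 0 (okc a).1 (okc a).2) _).
exact: ppoly_prod (fun i => ppoly_coord_exp i (a i)).
Qed.

Section Lattice.
Variable b : 'M[R]_r.
Hypothesis b_unit : b \in unitmx.
Hypothesis G_span :
  G = [set x | exists k : 'rV[int]_r, x = map_mx (fun z : int => z%:~R) k *m b].

Lemma G_row i : G (row i b).
Proof.
rewrite G_span rowE; exists (delta_mx 0 i); congr (_ *m _).
by apply/matrixP => a j; rewrite !mxE; case: (_ && _).
Qed.

Lemma periodic_rows f :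
  (forall i x, f (x + row i b) = f x) -> Defs.periodic G f.
Proof.
move=> frow g; rewrite G_span => -[k ->]; rewrite mulmx_sum_row.
elim/big_rec: _ => [|i v _ fv] x; first by rewrite addr0.
by rewrite mxE scaler_int addrA addrAC (shift_mulrz_invariant (frow i)) fv.
Qed.

Definition lattice_coord (j : 'I_r) (x : vec) : R := (x *m invmx b) ord0 j.

Lemma lattice_coord_shift i j x :
  lattice_coord j (x + row i b) = lattice_coord j x + (i == j)%:R.
Proof. by rewrite /lattice_coord mulmxDl mxE -row_mul mulmxV // !mxE. Qed.

Lemma ppoly_lattice_coord j : ppoly 1 (lattice_coord j).
Proof.
pose F l (x : vec) := x ord0 l * invmx b l j.
have pF l : ppoly 1 (F l).
  by rewrite -[1%N]addn0; exact: ppolyM (ppoly_coord l) (ppoly_cst 0 _).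
apply: eq_ppoly (ppoly_sum (index_enum 'I_r) (fun l (_ : true) => pF l)) => x.
by rewrite /lattice_coord mxE.
Qed.

Lemma ppoly_binomr k f : ppoly 1 f -> ppoly k (fun x => binomr (f x) k).
Proof.
move=> pf; elim: k => [|k IHk]; first exact: ppoly_cst 0 1.
have := ppolyM (ppolyM IHk (ppolyB pf (ppoly_cst 1 k%:R)))
  (ppoly_cst 0 (k.+1%:R)^-1).
by rewrite addn0 addn1.
Qed.

Definition binom_mono (be : 'I_r -> nat) (x : vec) : R :=
  \prod_(i < r) binomr (lattice_coord i x) (be i).

Lemma ppoly_binom_mono be : ppoly (\sum_(i < r) be i) (binom_mono be).
Proof.
exact: ppoly_prod (fun i => ppoly_binomr (be i) (ppoly_lattice_coord i)).
Qed.

Lemma delta_binom_mono be i :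
  delta (row i b) (binom_mono be) =
  if (0 < be i)%N then binom_mono (fun j => be j - (i == j))%N else cst 0.
Proof.
apply: funext => x.
rewrite /delta /binom_mono (bigD1 i) //= [X in _ - X](bigD1 i) //=.
rewrite (eq_bigr (fun j => binomr (lattice_coord j x) (be j))); last first.
  by move=> j /negbTE ji; rewrite lattice_coord_shift eq_sym ji addr0.
rewrite lattice_coord_shift eqxx -mulrBl.
case E: (be i) => [|k]; first by rewrite /= subrr mul0r.
rewrite binomrD1 addrAC subrr add0r [RHS](bigD1 i) //= eqxx E subn1 /=.
congr (_ * _).
by apply: eq_bigr => j /negbTE; rewrite eq_sym => ->; rewrite subn0.
Qed.

Local Notation bdeltas s := (deltas [seq row i b | i <- s]).

Lemma bdeltas_binom_mono s be :
  bdeltas s (binom_mono be) =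
  if [forall j, count_mem j s <= be j]%N
  then binom_mono (fun j => be j - count_mem j s)%N else cst 0.
Proof.
elim: s => [|i s IHs] /=.
  rewrite (_ : [forall j, _] = true); last by apply/forallP.
  by congr binom_mono; apply: funext => j; rewrite subn0.
rewrite IHs; case: ifP => le_s_be; last first.
  rewrite (_ : [forall j, _] = false).
    by apply: funext => x; rewrite /delta subrr.
  apply/negbTE/forallP => le_is_be; move/forallP: le_s_be; apply=> j.
  exact: leq_trans (leq_addl _ _) (le_is_be j).
rewrite delta_binom_mono subn_gt0.
have -> : [forall j, (i == j) + count_mem j s <= be j]%N =
          (count_mem i s < be i)%N.
  apply/forallP/idP => [/(_ i)|lt_i j]; first by rewrite eqxx.
  by case: eqVneq => [<-|_]; [rewrite add1n | exact: (forallP le_s_be)].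
case: ifP => // _; congr binom_mono; apply: funext => j.
by rewrite subnDA subnAC.
Qed.

Lemma bdeltas_binom_mono_top s be :
  size s = (\sum_(j < r) be j)%N ->
  bdeltas s (binom_mono be) = cst [forall j, count_mem j s == be j]%:R.
Proof.
move=> s_be; rewrite bdeltas_binom_mono; case: ifP => [le_s_be | le_s_beN].
  have := leqif_sum (fun j (_ : true) => leqif_eq (forallP le_s_be j)).
  rewrite sum_count_mem s_be => -[_]; rewrite eqxx => /esym/forallP eq_s_be.
  rewrite (_ : [forall j, _] = true); last by apply/forallP; exact: eq_s_be.
  apply: funext => x; rewrite /binom_mono big1 // => j _.
  by rewrite (eqP (eq_s_be j)) subnn.
case: forallP => // eq_s_be; move/negbT/forallPn: le_s_beN => -[j].
by rewrite (eqP (eq_s_be j)) leqnn.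
Qed.

Definition seq_of_midx (be : 'I_r -> nat) : seq 'I_r :=
  flatten [seq nseq (be i) i | i <- index_enum 'I_r].

Lemma count_seq_of_midx be j : count_mem j (seq_of_midx be) = be j.
Proof.
rewrite /seq_of_midx count_flatten -map_comp sumnE big_map.
rewrite (eq_bigr (fun i => (i == j) * be i)%N) => [|i _]; last first.
  by rewrite /= count_nseq.
by rewrite (bigD1 j) //= eqxx mul1n big1 ?addn0 // => i /negbTE ->.
Qed.

Lemma size_seq_of_midx be : size (seq_of_midx be) = (\sum_(j < r) be j)%N.
Proof.
by rewrite -sum_count_mem; apply: eq_bigr => j _; rewrite count_seq_of_midx.
Qed.

Lemma bdeltas_periodic k p s :
  (forall s', size s' = k.+1 -> bdeltas s' p = cst 0) -> size s = k ->
  Defs.periodic G (bdeltas s p).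
Proof.
move=> p0 sk; apply: periodic_rows => i; apply: delta_eq0.
by apply: (p0 (i :: s)); rewrite /= sk.
Qed.

(* The degree-N term of Newton's forward-difference expansion of p in the
   basis binom_mono. *)
Definition top_part N p (x : vec) : R :=
  \sum_(be : {ffun 'I_r -> 'I_N.+1} | (\sum_(j < r) be j == N)%N)
    bdeltas (seq_of_midx (fun j => be j : nat)) p x *
    binom_mono (fun j => be j : nat) x.

Section TopPart.
Variables (N : nat) (p : vec -> R).
Hypothesis p0 : forall s, size s = N.+1 -> bdeltas s p = cst 0.

Lemma ppoly_top_part : continuous p -> ppoly N (top_part N p).
Proof.
move=> cp; apply: ppoly_sum => be /eqP deg_be.
have s_be : size (seq_of_midx (fun j => be j : nat)) = N.
  by rewrite size_seq_of_midx.
have per_be := bdeltas_periodic p0 s_be.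
have := ppolyM (ppoly_periodic 0 (continuous_deltas cp) per_be)
  (ppoly_binom_mono (fun j => be j : nat)).
by rewrite add0n deg_be.
Qed.

Lemma bdeltas_top_part s : size s = N -> bdeltas s (top_part N p) = bdeltas s p.
Proof.
move=> sN; rewrite /top_part deltas_sum; apply: funext => x.
under eq_bigr => be /eqP deg_be.
  rewrite deltas_mull_invariant; last first.
    move=> _ /mapP[i _ ->] y; apply: (bdeltas_periodic p0) (G_row i) y.
    by rewrite size_seq_of_midx.
  rewrite /= bdeltas_binom_mono_top ?sN ?deg_be //.
  over.
have sN' : (size s <= N)%N by rewrite sN.
rewrite (bigD1 (midx_of_seq N s)) /=; last first.
  by rewrite (eq_bigr _ (fun i _ => midx_of_seqE i sN')) sum_count_mem sN.
rewrite (_ : [forall j, _] = true); last first.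
  by apply/forallP => j; rewrite midx_of_seqE.
rewrite mulr1 big1 ?addr0 => [|be /andP[_ be_neq]]; last first.
  case: forallP; rewrite ?mulr0 // => eq_s_be; case/eqP: be_neq.
  apply/ffunP => j; apply: val_inj.
  by rewrite /= midx_of_seqE // (eqP (eq_s_be j)).
have: perm_eq (seq_of_midx (fun j => midx_of_seq N s j : nat)) s.
  by apply/allP => y _ /=; rewrite count_seq_of_midx midx_of_seqE.
by move/(perm_map (fun i => row i b))/deltas_perm ->.
Qed.

End TopPart.

Lemma ppoly_of_vanishing_bdeltas n p :
  continuous p -> (forall s, size s = n.+1 -> bdeltas s p = cst 0) -> ppoly n p.
Proof.
elim: n p => [|n IHn] p cp p0.
  exact: ppoly_periodic cp (bdeltas_periodic p0 (s := [::]) erefl).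
have pP := ppoly_top_part p0 cp.
have cT := ppoly_continuous pP.
have cP : continuous (p \- top_part n.+1 p).
  by move=> x; apply: continuousB; [exact: cp | exact: cT].
have : ppoly n (p \- top_part n.+1 p).
  apply: IHn cP _ => s sn.
  by rewrite deltasB bdeltas_top_part //; apply: funext => x; exact: subrr.
move=> /(ppoly_widen (leqnSn n)) /ppolyD /(_ pP).
by apply: eq_ppoly => x /=; rewrite subrK.
Qed.

End Lattice.
End PeriodicPolynomials.

Theorem proposition3p2 (R : realType) (r : nat) (G : set 'rV[R]_r) (n : nat)
    (hG : is_full_lattice G) (p : 'rV[R]_r -> R) (hp : continuous p) :
  periodic_poly G n p <-> in_calP G n p.
Proof.
split=> [/periodic_poly_ppoly/ppoly_in_calP // | hP].
have [b [b_unit G_span]] := hG.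
apply/ppoly_periodic_poly/(ppoly_of_vanishing_bdeltas b_unit G_span hp) => s sn.
apply: (in_calP_deltas hP); last by rewrite size_map.
by move=> _ /mapP[i _ ->]; exact: G_row.
Qed.
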